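(* Let $\psi(x)=(1-|x|^2)_+^2$ on $\mathbb{R}^2$. Suppose that $w:\mathbb{R}^2\to[0,\infty)$ is locally in $L^1\cap L^\infty$, that $\int_{B(1)}w(x)\,dx\le m$ for some $m>0$, and let $\varrho,\delta\in(0,1)$. (i) There exists $H_0\in(0,1)$ such that $\int_{B(\varrho)}w(x)\,dx\le(1-\delta)m$ implies $\int_{\mathbb{R}^2}\psi(x)w(x)\,dx\le(1-H_0)m$. (ii) There exists $H_1\in(0,1)$ such that if $\int_{B(1)}w(x)\,dx\le m$ and $\int_{\mathbb{R}^2}\psi(x)w(x)\,dx\ge(1-H_1)m$, then $\int_{B(\varrho)}w(x)\,dx\ge\left(1-\frac{\delta}{2}\right)m$. (iii) If $\int_{\mathbb{R}^2}\psi(x)w(x)\,dx\le(1-H)m$ for some $H\in(0,1)$, then $\int_{B(\beta)}w(x)\,dx\le\left(1-\frac{H}{2}\right)m$ for every $\beta>0$ with $\beta^2\le\frac{H}{4}$.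
   Context: $B(r)$ denotes the open ball of radius $r$ centered at the origin of $\mathbb{R}^2$; $(s)_+=\max\{s,0\}$. *)

(* R^2 is modelled as R * R with the product
   Lebesgue measure. *)
From HB Require Import structures.
From mathcomp Require Import all_boot all_order all_algebra.
From mathcomp Require Import all_classical all_reals all_analysis.
Set Implicit Arguments. Unset Strict Implicit. Unset Printing Implicit Defensive.
Import Order.TTheory GRing.Theory Num.Theory.
Local Open Scope classical_set_scope.
Local Open Scope ring_scope.

Definition leb2 (R : realType) :=
  ((@lebesgue_measure R) \x (@lebesgue_measure R))%E.

Arguments leb2 R : clear implicits.

Definition sqnorm2 (R : realType) (x : R * R) : R := x.1 ^+ 2 + x.2 ^+ 2.

Definition Bo (R : realType) (r : R) : set (R * R) :=
  [set x | sqnorm2 x < r ^+ 2].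

Definition psi (R : realType) (x : R * R) : R := (Num.max (1 - sqnorm2 x) 0) ^+ 2.

Definition loc_L1_Linf (R : realType) (w : R * R -> R) : Prop :=
  measurable_fun [set: R * R] w /\
  forall r : R, 0 < r ->
    (leb2 R).-integrable (Bo r) (EFin \o w) /\
    exists M : R, {ae leb2 R, forall x, Bo r x -> `|w x| <= M}.

(** The weight [psi] is at most [1] on [B(1)], at most [(1 - rho^2)^2 < 1] on
the annulus [B(1) \ B(rho)], vanishes outside [B(1)] and is at least
[(1 - beta^2)^2] on [B(beta)].  Splitting the mass of [w] in [B(1)] as [a + d],
with [a] the mass in [B(rho)], gives [int psi w <= a + c d] for
[c = (1 - rho^2)^2], so (i) and (ii) become linear inequalities in [a] and [d]
(with [H0 = (1 - c) delta] and [H1 = H0 / 2]); (iii) follows from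
[(1 - beta^2)^2 >= 1 - 2 beta^2 >= 1 - H/2]. *)
From HB Require Import structures.
From mathcomp Require Import all_boot all_order all_algebra.
From mathcomp Require Import all_classical all_reals all_analysis.
From mathcomp Require Import lra measurable_realfun.
Set Implicit Arguments. Unset Strict Implicit. Unset Printing Implicit Defensive.
Import Order.TTheory GRing.Theory Num.Theory.
Local Open Scope classical_set_scope.
Local Open Scope ring_scope.

Section Psi.
Variable R : realType.
Implicit Types (r b : R) (x : R * R).

Lemma sqnorm2_ge0 x : 0 <= sqnorm2 x.
Proof. by rewrite /sqnorm2 addr_ge0 // sqr_ge0. Qed.

Lemma measurable_sqnorm2 : measurable_fun [set: R * R] (@sqnorm2 R).
Proof.
by apply: measurable_funD; apply: measurable_funX;
  [exact: measurable_fst | exact: measurable_snd].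
Qed.

Lemma measurable_Bo r : measurable (Bo r).
Proof.
have := measurable_sqnorm2 measurableT (measurable_itv `]-oo, r ^+ 2[).
by rewrite setTI; congr measurable; apply/seteqP; split=> x; rewrite /= in_itv.
Qed.

Lemma measurable_annulus r b : measurable (Bo b `\` Bo r).
Proof. by apply: measurableD; exact: measurable_Bo. Qed.

Lemma Bo_subset r b : 0 <= r -> r <= b -> Bo r `<=` Bo b.
Proof.
move=> r0 rb x /= /lt_le_trans; apply.
by rewrite ler_pXn2r // ?nnegrE // (le_trans r0).
Qed.

Lemma measurable_psi : measurable_fun [set: R * R] (@psi R).
Proof.
apply: measurable_funX; apply: measurable_maxr => //.
exact: measurable_funB measurable_sqnorm2.
Qed.

Lemma psi_ge0 x : 0 <= psi x.
Proof. exact: sqr_ge0. Qed.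

Lemma psi_le1 x : psi x <= 1.
Proof.
have := sqnorm2_ge0 x; rewrite /psi => x0.
by case: (leP (1 - sqnorm2 x) 0) => h; [rewrite expr0n | nra].
Qed.

Lemma psi_eq0 x : ~ Bo 1 x -> psi x = 0.
Proof.
rewrite /Bo /= expr1n => /negP; rewrite -leNgt => x1.
by rewrite /psi max_r ?expr0n // subr_le0.
Qed.

Lemma psi_le_annulus r x : 0 <= r < 1 -> (Bo 1 `\` Bo r) x ->
  psi x <= (1 - r ^+ 2) ^+ 2.
Proof.
rewrite /Bo /= expr1n => /andP[r0 r1] [x1 /negP]; rewrite -leNgt => rx.
by rewrite /psi max_l; [nra | rewrite subr_ge0 ltW].
Qed.

Lemma psi_ge_ball b x : 0 <= b <= 1 -> Bo b x -> (1 - b ^+ 2) ^+ 2 <= psi x.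
Proof.
rewrite /Bo /= => /andP[b0 b1] xb; have := sqnorm2_ge0 x => x0.
have b21 : b ^+ 2 <= 1 by rewrite expr_le1.
by rewrite /psi max_l; nra.
Qed.

End Psi.

Lemma ge0_adde_le_fin (R : realType) (x y : \bar R) (m : R) :
  (0 <= x)%E -> (0 <= y)%E -> (x + y <= m%:E)%E ->
  exists a d : R, [/\ x = a%:E, y = d%:E, 0 <= a, 0 <= d & a + d <= m].
Proof.
by case: x => [a||]; case: y => [d||] // d0 a0; rewrite -EFinD lee_fin; exists a, d.
Qed.

Lemma integral_Bo_split (R : realType) (r s : R) (f : R * R -> \bar R) :
  0 <= r <= s -> (forall x, Bo s x -> (0 <= f x)%E) -> measurable_fun (Bo s) f ->
  (\int[leb2 R]_(x in Bo s) f x =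
   \int[leb2 R]_(x in Bo r) f x + \int[leb2 R]_(x in Bo s `\` Bo r) f x)%E.
Proof.
move=> /andP[r0 rs] f0 mf; have sub := Bo_subset r0 rs.
rewrite -{1}(setDUK sub) ge0_integral_setU.
- by [].
- exact: measurable_Bo.
- exact: measurable_annulus.
- by rewrite setDUK.
- by move=> x; rewrite setDUK //; exact: f0.
- by rewrite disj_set2E setDIK.
Qed.

Section Weight.
Variables (R : realType) (w : R * R -> R).
Hypotheses (w_ge0 : forall x, 0 <= w x) (mw : measurable_fun [set: R * R] w).
Local Notation mu := (leb2 R).

Let measurable_w (D : set (R * R)) : measurable_fun D (fun x => (w x)%:E).
Proof. by apply: (measurable_funS measurableT) => //; exact/measurable_EFinP. Qed.

Let measurable_psiw (D : set (R * R)) :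
  measurable_fun D (fun x => (psi x * w x)%:E).
Proof.
apply: (measurable_funS measurableT) => //; apply/measurable_EFinP.
by apply: measurable_funM => //; exact: measurable_psi.
Qed.

Local Ltac integral_side := first
  [ exact: measurable_Bo | exact: measurable_annulus
  | exact: measurable_w | exact: measurable_psiw
  | by apply: measurable_funeM; exact: measurable_w
  | by move=> x _; rewrite lee_fin w_ge0
  | by move=> x _; rewrite lee_fin mulr_ge0 ?psi_ge0 ?w_ge0 ].

Lemma integral_w_ge0 (D : set (R * R)) : (0 <= \int[mu]_(x in D) (w x)%:E)%E.
Proof. by apply: integral_ge0 => x _; rewrite lee_fin. Qed.

Lemma integral_psiw_Bo1 :
  (\int[mu]_(x in [set: R * R]) (psi x * w x)%:E =
   \int[mu]_(x in Bo 1) (psi x * w x)%:E)%E.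
Proof.
rewrite [RHS]integral_mkcond; apply: eq_integral => x _; rewrite /patch.
by case: ifPn => // /negP; rewrite inE => /psi_eq0 ->; rewrite mul0r.
Qed.

Lemma integral_w_le_Bo (r s : R) : 0 <= r <= s ->
  (\int[mu]_(x in Bo r) (w x)%:E <= \int[mu]_(x in Bo s) (w x)%:E)%E.
Proof.
move=> /andP[r0 rs].
by apply: ge0_subset_integral; try integral_side; exact: Bo_subset.
Qed.

Section Annulus.
Variable rho : R.
Hypothesis rho01 : 0 < rho < 1.
Local Notation A := (Bo 1 `\` Bo rho).

Let rho_le1 : 0 <= rho <= 1.
Proof. by case/andP: rho01 => /ltW -> /ltW. Qed.

Lemma integral_psiw_le_split :
  (\int[mu]_(x in [set: R * R]) (psi x * w x)%:E <=
   \int[mu]_(x in Bo rho) (w x)%:E +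
   ((1 - rho ^+ 2) ^+ 2)%:E * \int[mu]_(x in A) (w x)%:E)%E.
Proof.
rewrite integral_psiw_Bo1 (integral_Bo_split rho_le1); try integral_side.
apply: leeD.
  apply: ge0_le_integral; try integral_side.
  by move=> x _; rewrite lee_fin; apply: ler_piMl; [exact: w_ge0 | exact: psi_le1].
rewrite -ge0_integralZl_EFin ?sqr_ge0 //; try integral_side.
apply: ge0_le_integral; try integral_side.
move=> x Ax; rewrite lee_fin ler_wpM2r // psi_le_annulus //.
by case/andP: rho01 => /ltW -> ->.
Qed.

Lemma psi_mass_split (m : R) :
  (\int[mu]_(x in Bo 1) (w x)%:E <= m%:E)%E ->
  exists a d : R,
    [/\ (\int[mu]_(x in Bo rho) (w x)%:E = a%:E)%E, 0 <= a, 0 <= d, a + d <= m &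
        (\int[mu]_(x in [set: R * R]) (psi x * w x)%:E <=
         (a + (1 - rho ^+ 2) ^+ 2 * d)%:E)%E].
Proof.
rewrite (integral_Bo_split rho_le1); try integral_side.
move=> /(ge0_adde_le_fin (integral_w_ge0 _) (integral_w_ge0 _)).
move=> [a [d [a_eq d_eq a0 d0 ad]]]; exists a, d; split=> //.
by rewrite EFinD EFinM -a_eq -d_eq; exact: integral_psiw_le_split.
Qed.

End Annulus.

Lemma integral_psiw_ge_ball (beta : R) : 0 <= beta <= 1 ->
  (((1 - beta ^+ 2) ^+ 2)%:E * \int[mu]_(x in Bo beta) (w x)%:E <=
   \int[mu]_(x in [set: R * R]) (psi x * w x)%:E)%E.
Proof.
move=> beta01.
rewrite -ge0_integralZl_EFin ?sqr_ge0 //; try integral_side.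
apply: (@le_trans _ _ (\int[mu]_(x in Bo beta) (psi x * w x)%:E)%E).
  apply: ge0_le_integral; try integral_side.
  - by move=> x _; rewrite lee_fin mulr_ge0 ?sqr_ge0.
  - by move=> x xb; rewrite lee_fin ler_wpM2r // psi_ge_ball.
by apply: ge0_subset_integral; try integral_side.
Qed.

End Weight.

Lemma sqr_one_sub_sqr_lt1 (R : realType) (r : R) : 0 < r < 1 -> (1 - r ^+ 2) ^+ 2 < 1.
Proof.
case/andP=> r0 r1; have /andP[s0 s1] : 0 < 1 - r ^+ 2 < 1 by apply/andP; split; nra.
by rewrite expr_lt1 // ltW.
Qed.

Section Estimates.
Variables (R : realType) (w : R * R -> R) (m : R).
Hypotheses (w_ge0 : forall x, 0 <= w x) (mw : measurable_fun [set: R * R] w).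
Hypothesis mass1 : (\int[leb2 R]_(x in Bo 1) (w x)%:E <= m%:E)%E.

Lemma psi_deficit_of_ball_deficit (rho delta : R) : 0 < rho < 1 ->
  (\int[leb2 R]_(x in Bo rho) (w x)%:E <= ((1 - delta) * m)%:E)%E ->
  (\int[leb2 R]_(x in [set: R * R]) (psi x * w x)%:E <=
   ((1 - (1 - (1 - rho ^+ 2) ^+ 2) * delta) * m)%:E)%E.
Proof.
move=> rho01; have [a [d [-> a0 d0 ad psiw]]] := psi_mass_split w_ge0 mw rho01 mass1.
rewrite lee_fin => ball; apply: (le_trans psiw); rewrite lee_fin.
have := sqr_one_sub_sqr_lt1 rho01; set c := (1 - rho ^+ 2) ^+ 2 => c1.
have c0 : 0 <= c by exact: sqr_ge0.
have : 0 <= c * (m - a - d) by apply: mulr_ge0; lra.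
have : 0 <= (1 - c) * ((1 - delta) * m - a) by apply: mulr_ge0; lra.
nra.
Qed.

Lemma ball_mass_of_psi_mass (rho delta : R) : 0 < rho < 1 ->
  (((1 - (1 - (1 - rho ^+ 2) ^+ 2) * delta / 2) * m)%:E <=
   \int[leb2 R]_(x in [set: R * R]) (psi x * w x)%:E)%E ->
  (((1 - delta / 2) * m)%:E <= \int[leb2 R]_(x in Bo rho) (w x)%:E)%E.
Proof.
move=> rho01; have [a [d [-> a0 d0 ad psiw]]] := psi_mass_split w_ge0 mw rho01 mass1.
move=> /le_trans /(_ psiw); rewrite !lee_fin.
have := sqr_one_sub_sqr_lt1 rho01; set c := (1 - rho ^+ 2) ^+ 2 => c1 psi_mass.
have : 0 <= c * (m - a - d) by apply: mulr_ge0; [exact: sqr_ge0 | lra].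
move=> cm; rewrite -(ler_pM2l (_ : 0 < 1 - c)); [nra | lra].
Qed.

Lemma ball_deficit_of_psi_deficit (H beta : R) :
  0 < H < 1 ->
  (\int[leb2 R]_(x in [set: R * R]) (psi x * w x)%:E <= ((1 - H) * m)%:E)%E ->
  0 < beta -> beta ^+ 2 <= H / 4 ->
  (\int[leb2 R]_(x in Bo beta) (w x)%:E <= ((1 - H / 2) * m)%:E)%E.
Proof.
move=> /andP[H0 H1] psi_mass beta0 betaH.
have beta1 : beta <= 1 by nra.
have beta01 : 0 <= beta <= 1 by rewrite ltW.
have := le_trans (integral_w_le_Bo w_ge0 mw beta01) mass1.
move: (integral_w_ge0 w_ge0 (Bo beta)) (integral_psiw_ge_ball w_ge0 mw beta01).
case: (\int[leb2 R]_(x in Bo beta) (w x)%:E)%E => [b||] //.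
rewrite !lee_fin => b0 /le_trans /(_ psi_mass); rewrite -EFinM !lee_fin => psi_b bm.
set k := (1 - beta ^+ 2) ^+ 2 in psi_b.
have kH : 1 - H / 2 <= k by rewrite /k; nra.
have : (1 - H / 2) * b <= (1 - H) * m by apply: le_trans psi_b; rewrite ler_wpM2r.
move=> Hb; rewrite -(ler_pM2l (_ : 0 < 1 - H / 2)); [nra | lra].
Qed.

End Estimates.

Theorem lemma2p1 (R : realType) (rho delta : R) :
  0 < rho < 1 -> 0 < delta < 1 ->
  (* (i) *)
  (exists H0 : R, 0 < H0 < 1 /\
    forall (w : R * R -> R) (m : R),
      (forall x, 0 <= w x) -> loc_L1_Linf w -> 0 < m ->
      (\int[leb2 R]_(x in Bo 1) (w x)%:E <= m%:E)%E ->
      (\int[leb2 R]_(x in Bo rho) (w x)%:E <= ((1 - delta) * m)%:E)%E ->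
      (\int[leb2 R]_(x in [set: R * R]) (psi x * w x)%:E <= ((1 - H0) * m)%:E)%E)
  /\
  (* (ii) *)
  (exists H1 : R, 0 < H1 < 1 /\
    forall (w : R * R -> R) (m : R),
      (forall x, 0 <= w x) -> loc_L1_Linf w -> 0 < m ->
      (\int[leb2 R]_(x in Bo 1) (w x)%:E <= m%:E)%E ->
      (((1 - H1) * m)%:E <= \int[leb2 R]_(x in [set: R * R]) (psi x * w x)%:E)%E ->
      (((1 - delta / 2) * m)%:E <= \int[leb2 R]_(x in Bo rho) (w x)%:E)%E)
  /\
  (* (iii) *)
  (forall (w : R * R -> R) (m H beta : R),
      (forall x, 0 <= w x) -> loc_L1_Linf w -> 0 < m ->
      (\int[leb2 R]_(x in Bo 1) (w x)%:E <= m%:E)%E ->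
      0 < H < 1 ->
      (\int[leb2 R]_(x in [set: R * R]) (psi x * w x)%:E <= ((1 - H) * m)%:E)%E ->
      0 < beta -> beta ^+ 2 <= H / 4 ->
      (\int[leb2 R]_(x in Bo beta) (w x)%:E <= ((1 - H / 2) * m)%:E)%E).
Proof.
move=> rho01 /andP[delta0 delta1].
have c1 := sqr_one_sub_sqr_lt1 rho01.
have c0 : 0 <= (1 - rho ^+ 2) ^+ 2 := sqr_ge0 _.
split; [|split].
- exists ((1 - (1 - rho ^+ 2) ^+ 2) * delta); split; first by apply/andP; split; nra.
  move=> w m w0 [mw _] _ mass1.
  exact: psi_deficit_of_ball_deficit.
- exists ((1 - (1 - rho ^+ 2) ^+ 2) * delta / 2); split; first by apply/andP; split; nra.
  move=> w m w0 [mw _] _ mass1.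
  exact: ball_mass_of_psi_mass.
- move=> w m H beta w0 [mw _] _ mass1.
  exact: ball_deficit_of_psi_deficit.
Qed.
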